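(* Let $\epsilon > 0$, and fix integers $k \ge 2$ and $n > k$. Consider the randomized algorithm $\mathcal{A}$ which, on input a database $D$ of $n$ rows, does the following. It draws independent $Z_1 \sim \mathrm{Lap}\!\left(\frac{9 + 5/n}{\epsilon/2}\right)$ and $Z_2 \sim \mathrm{Lap}\!\left(\frac{7}{\epsilon/2}\right)$. It sets $\widehat{\mathrm{SSA}} = \mathrm{SSA}(D) + Z_1$, $\widehat{\mathrm{SSE}} = \mathrm{SSE}(D) + Z_2$, and $\widehat F = \frac{\widehat{\mathrm{SSA}}/(k-1)}{\widehat{\mathrm{SSE}}/(n-k)}$. It outputs the triple $(\widehat F, \widehat{\mathrm{SSA}}, \widehat{\mathrm{SSE}})$. Then $\mathcal{A}$ is $\epsilon$-differentially private.
   Context: A database $D$ consists of $n$ rows. Each row is a pair $(g, y)$ with group label $g \in \{1,\dots,k\}$ and response $y \in [0,1]$. Let $n_i$ be the number of rows in group $i$, with responses $y_{i1},\dots,y_{in_i}$ and group mean $\overline{y}_i$. Let $\overline{y}$ be the mean of all responses; empty groups contribute nothing. Define $\mathrm{SSA}(D) = \sum_{i=1}^k n_i(\overline{y}_i - \overline{y})^2$ and $\mathrm{SSE}(D) = \sum_{i=1}^k\sum_{j=1}^{n_i}(y_{ij}-\overline{y}_i)^2$. $\mathrm{Lap}(b)$ denotes the Laplace distribution with density $e^{-|x|/b}/(2b)$ on $\mathbb{R}$. The output $\widehat F$ is well defined almost surely, since $\widehat{\mathrm{SSE}} \neq 0$ with probability $1$. Two databases with $n$ rows each are neighboring if they differ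 in exactly one row; both the label and the response of that row may change. A randomized algorithm $f$ with range $R$ is $\epsilon$-differentially private if $\Pr[f(D)\in S] \le e^{\epsilon}\Pr[f(D')\in S]$ for all neighboring $D, D'$ and all measurable $S \subseteq R$. *)

From Stdlib Require Import Reals Lra Lia List Classical ClassicalEpsilon.
Import ListNotations.
Open Scope R_scope.

(* A row is a pair (g, y): group label g (a natural number) and response y. *)
Definition row := (nat * R)%type.
Definition db := list row.

Definition valid_db (k n : nat) (D : db) : Prop :=
  length D = n /\
  forall r, In r D -> (1 <= fst r <= k)%nat /\ 0 <= snd r <= 1.

Definition neighboring (n : nat) (D D' : db) : Prop :=
  length D = n /\ length D' = n /\
  exists j, (j < n)%nat /\ nth j D (0%nat, 0) <> nth j D' (0%nat, 0) /\
    forall i, i <> j -> nth i D (0%nat, 0) = nth i D' (0%nat, 0).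

Definition Rsum (l : list R) : R := fold_right Rplus 0 l.

Definition group (D : db) (i : nat) : list R :=
  map snd (filter (fun r => Nat.eqb (fst r) i) D).

Definition n_i (D : db) (i : nat) : R := INR (length (group D i)).
Definition mean_i (D : db) (i : nat) : R := Rsum (group D i) / n_i D i.
Definition mean_all (D : db) : R := Rsum (map snd D) / INR (length D).

Definition sum_groups (k : nat) (f : nat -> R) : R := Rsum (map f (seq 1 k)).

Definition SSA (k : nat) (D : db) : R :=
  sum_groups k (fun i => n_i D i * (mean_i D i - mean_all D) ^ 2).

Definition SSE (k : nat) (D : db) : R :=
  sum_groups k (fun i => Rsum (map (fun y => (y - mean_i D i) ^ 2) (group D i))).

Definition lap_pdf (b x : R) : R := exp (- Rabs x / b) / (2 * b).

Lemma lap_pdf_shift_cont (b c t : R) :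
  continuity_pt (fun x => lap_pdf b (x - c)) t.
Proof.
  unfold lap_pdf, Rdiv.
  apply continuity_pt_mult; [| apply continuity_pt_const; intros ? ?; reflexivity].
  apply (continuity_pt_comp (fun x => - Rabs (x - c) * / b) exp).
  - apply continuity_pt_mult; [| apply continuity_pt_const; intros ? ?; reflexivity].
    apply continuity_pt_opp.
    apply (continuity_pt_comp (fun x => x - c) Rabs).
    + apply continuity_pt_minus; [apply derivable_continuous_pt, derivable_pt_id |
        apply continuity_pt_const; intros ? ?; reflexivity].
    + apply Rcontinuity_abs.
  - apply derivable_continuous_pt, derivable_pt_exp.
Qed.

(* Pr[c + Z in [x, y]] for Z ~ Lap(b): the integral of the density. *)
Definition lap_mass (b c x y : R) : R :=
  match Rle_dec x y with
  | left h => RiemannInt (continuity_implies_RiemannInt h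
                            (fun t _ => lap_pdf_shift_cont b c t))
  | right _ => 0
  end.

Definition rect := ((R * R) * (R * R))%type.
Definition in_rect (r : rect) (p : R * R) : Prop :=
  let '((x1, y1), (x2, y2)) := r in x1 <= fst p <= y1 /\ x2 <= snd p <= y2.
Definition rect_mass (b1 c1 b2 c2 : R) (r : rect) : R :=
  let '((x1, y1), (x2, y2)) := r in lap_mass b1 c1 x1 y1 * lap_mass b2 c2 x2 y2.

Definition is_lower_bound (E : R -> Prop) (m : R) : Prop := forall x, E x -> m <= x.
Definition is_glb (E : R -> Prop) (m : R) : Prop :=
  is_lower_bound E m /\ forall m', is_lower_bound E m' -> m' <= m.

(* infimum of a set of reals (0 if it has none; it always exists below). *)
Definition inf_R (E : R -> Prop) : R :=
  match excluded_middle_informative (exists l, is_glb E l) with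
  | left h => proj1_sig (constructive_indefinite_description _ h)
  | right _ => 0
  end.

(* Probability that (c1+Z1, c2+Z2) lies in A: the (outer) measure obtained by
   covering A with countably many rectangles (Caratheodory extension of the
   product measure; agrees with the probability on all Borel sets). *)
Definition prob2 (b1 c1 b2 c2 : R) (A : R * R -> Prop) : R :=
  inf_R (fun s => exists r : nat -> rect,
           (forall p, A p -> exists m, in_rect (r m) p) /\
           infinite_sum (fun m => rect_mass b1 c1 b2 c2 (r m)) s).

Definition R3 := (R * R * R)%type.
Inductive borel3 : (R3 -> Prop) -> Prop :=
  | borel3_box : forall a1 b1 a2 b2 a3 b3 : R,
      borel3 (fun p => let '(x, y, z) := p in
                a1 < x < b1 /\ a2 < y < b2 /\ a3 < z < b3)
  | borel3_compl : forall A, borel3 A -> borel3 (fun p => ~ A p)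
  | borel3_union : forall A : nat -> R3 -> Prop,
      (forall m, borel3 (A m)) -> borel3 (fun p => exists m, A m p)
  | borel3_ext : forall A B, borel3 A -> (forall p, A p <-> B p) -> borel3 B.

Definition b_SSA (eps : R) (n : nat) : R := (9 + 5 / INR n) / (eps / 2).
Definition b_SSE (eps : R) : R := 7 / (eps / 2).

(* output on noisy values (a, e) = (SSA^, SSE^) *)
Definition output (k n : nat) (a e : R) : R3 :=
  ((a / INR (k - 1)) / (e / INR (n - k)), a, e).

Definition prob_alg (eps : R) (k n : nat) (D : db) (S : R3 -> Prop) : R :=
  prob2 (b_SSA eps n) (SSA k D) (b_SSE eps) (SSE k D)
        (fun p => S (output k n (fst p) (snd p))).

(** The Laplace density satisfies lap_pdf b (t - c) <= exp (|c - c'| / b) * lap_pdf b (t - c'),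
    a pointwise bound that survives integration over rectangles and then the
    infimum over countable rectangle covers defining [prob2]; so shifting the
    centres of the two noises by d1, d2 costs a factor exp (d1 / b1 + d2 / b2)
    on every set, measurable or not.  With
    F(L) = (Σ L)² / |L|, the classical identities SSE = Σ y² - Σ_i F(group i)
    and SSA = Σ_i F(group i) - F(all responses) hold, and adding one response
    in [0,1] to a list of such responses moves F by at most 1.  Since both
    statistics are invariant under reordering rows, neighbours can be taken to
    be r :: C and r' :: C; comparing each with C shows that SSE moves by at
    most 3 and SSA by at most 4, and 4 / b_SSA + 3 / b_SSE <= ε. *)

From Stdlib Require Import Reals Lra Lia List Permutation Classical ClassicalEpsilon.
Open Scope R_scope.

Lemma exp_le_exp_compat x y : x <= y -> exp x <= exp y.
Proof. intros [H | ->]; [left; apply exp_increasing, H | right; reflexivity]. Qed.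

Lemma lap_pdf_shift_le b c c' t : 0 < b ->
  lap_pdf b (t - c) <= exp (Rabs (c - c') / b) * lap_pdf b (t - c').
Proof.
  intros Hb. unfold lap_pdf, Rdiv.
  rewrite <- Rmult_assoc, <- exp_plus.
  apply Rmult_le_compat_r; [left; apply Rinv_0_lt_compat; lra |].
  apply exp_le_exp_compat.
  assert (Htri : Rabs (t - c') <= Rabs (t - c) + Rabs (c - c')).
  { replace (t - c') with ((t - c) + (c - c')) by ring. apply Rabs_triang. }
  assert (0 < / b) by (apply Rinv_0_lt_compat; lra).
  nra.
Qed.

Lemma lap_mass_nonneg b c x y : 0 < b -> 0 <= lap_mass b c x y.
Proof.
  intros Hb. unfold lap_mass. destruct (Rle_dec x y) as [Hxy | _]; [| lra].
  pose proof (RiemannInt_P14 x y 0) as Hzero.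
  rewrite <- (Rmult_0_l (y - x)), <- (RiemannInt_P15 Hzero).
  apply RiemannInt_P19; [exact Hxy |].
  intros t _. unfold fct_cte, lap_pdf, Rdiv.
  apply Rmult_le_pos; [left; apply exp_pos | left; apply Rinv_0_lt_compat; lra].
Qed.

Lemma lap_mass_shift_le b c c' x y : 0 < b ->
  lap_mass b c x y <= exp (Rabs (c - c') / b) * lap_mass b c' x y.
Proof.
  intros Hb. unfold lap_mass. destruct (Rle_dec x y) as [Hxy | _]; [| lra].
  set (K := exp (Rabs (c - c') / b)).
  set (Ic' := continuity_implies_RiemannInt Hxy (fun t _ => lap_pdf_shift_cont b c' t)).
  pose proof (RiemannInt_P14 x y 0) as Hzero.
  pose proof (RiemannInt_P10 K Hzero Ic') as HKc'.
  rewrite <- (Rplus_0_l (K * RiemannInt Ic')), <- (Rmult_0_l (y - x)) at 1.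
  rewrite <- (RiemannInt_P15 Hzero), <- (RiemannInt_P13 Hzero Ic' HKc').
  apply RiemannInt_P19; [exact Hxy |].
  intros t _. unfold fct_cte. rewrite Rplus_0_l. apply lap_pdf_shift_le, Hb.
Qed.

Lemma rect_mass_nonneg b1 c1 b2 c2 rr : 0 < b1 -> 0 < b2 ->
  0 <= rect_mass b1 c1 b2 c2 rr.
Proof.
  intros Hb1 Hb2. destruct rr as [[x1 y1] [x2 y2]].
  apply Rmult_le_pos; apply lap_mass_nonneg; assumption.
Qed.

Lemma rect_mass_shift_le b1 b2 c1 c2 c1' c2' rr : 0 < b1 -> 0 < b2 ->
  rect_mass b1 c1 b2 c2 rr
  <= exp (Rabs (c1 - c1') / b1 + Rabs (c2 - c2') / b2) * rect_mass b1 c1' b2 c2' rr.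
Proof.
  intros Hb1 Hb2. destruct rr as [[x1 y1] [x2 y2]]. simpl. rewrite exp_plus.
  set (K1 := exp (Rabs (c1 - c1') / b1)). set (K2 := exp (Rabs (c2 - c2') / b2)).
  replace (K1 * K2 * (lap_mass b1 c1' x1 y1 * lap_mass b2 c2' x2 y2))
    with ((K1 * lap_mass b1 c1' x1 y1) * (K2 * lap_mass b2 c2' x2 y2)) by ring.
  apply Rmult_le_compat; auto using lap_mass_nonneg; apply lap_mass_shift_le; assumption.
Qed.

Lemma Un_cv_const c : Un_cv (fun _ => c) c.
Proof. intros e He. exists 0%nat. intros. unfold Rdist. rewrite Rminus_diag, Rabs_R0. lra. Qed.

Lemma infinite_sum_nonneg a s : (forall m, 0 <= a m) -> infinite_sum a s -> 0 <= s.
Proof.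
  intros Ha Hs.
  exact (Rle_cv_lim (fun N => cond_pos_sum a N Ha) (Un_cv_const 0) Hs).
Qed.

Lemma infinite_sum_le_scal a b K s :
  (forall m, 0 <= b m <= K * a m) -> infinite_sum a s ->
  exists t, infinite_sum b t /\ t <= K * s.
Proof.
  intros Hba Ha.
  assert (HKa : Un_cv (fun N => sum_f_R0 (fun m => K * a m) N) (K * s)).
  { assert (Hscal : forall N, sum_f_R0 (fun m => K * a m) N = K * sum_f_R0 a N).
    { induction N as [| N IH]; simpl; [| rewrite IH]; ring. }
    intros e He. destruct (CV_mult _ _ _ _ (Un_cv_const K) Ha e He) as [N HN].
    exists N. intros m Hm. rewrite Hscal. exact (HN m Hm). }
  destruct (Rseries_CV_comp b (fun m => K * a m) Hba (exist _ _ HKa)) as [t Ht].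
  exists t. split; [exact Ht |].
  refine (Rle_cv_lim _ Ht HKa).
  intro N. apply sum_Rle. intros m _. apply Hba.
Qed.

Lemma inf_R_empty E : (forall x, ~ E x) -> inf_R E = 0.
Proof.
  intros Hempty. unfold inf_R.
  destruct (excluded_middle_informative _) as [Hglb | _]; [exfalso | reflexivity].
  destruct Hglb as [l [_ Hgreatest]].
  assert (l + 1 <= l) by (apply Hgreatest; intros x Hx; destruct (Hempty x Hx)).
  lra.
Qed.

Lemma inf_R_glb E m : (exists x, E x) -> is_lower_bound E m -> is_glb E (inf_R E).
Proof.
  intros [x0 Hx0] Hm.
  assert (Hglb : exists l, is_glb E l).
  { destruct (completeness (fun y => E (- y))) as [u [Hub Hleast]].
    - exists (- m). intros y Hy. specialize (Hm _ Hy). lra.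
    - exists (- x0). rewrite Ropp_involutive. exact Hx0.
    - exists (- u). split.
      + intros x Hx. assert (- x <= u) by (apply Hub; rewrite Ropp_involutive; exact Hx). lra.
      + intros m' Hm'. assert (u <= - m') by (apply Hleast; intros y Hy; specialize (Hm' _ Hy); lra).
        lra. }
  unfold inf_R. destruct (excluded_middle_informative _) as [H | H]; [| contradiction].
  exact (proj2_sig (constructive_indefinite_description _ H)).
Qed.

Lemma inf_R_le_scal (E E' : R -> Prop) K : 0 < K ->
  is_lower_bound E 0 -> is_lower_bound E' 0 ->
  (forall x', E' x' -> exists x, E x /\ x <= K * x') ->
  ((exists x, E x) -> exists x', E' x') ->
  inf_R E <= K * inf_R E'.
Proof.
  intros HK HE HE' Hcmp Hne.
  destruct (classic (exists x', E' x')) as [[x' Hx'] | Hempty].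
  - destruct (Hcmp x' Hx') as [x [Hx _]].
    destruct (inf_R_glb E 0) as [Hlow _]; [exists x; exact Hx | exact HE |].
    destruct (inf_R_glb E' 0) as [_ Hgreatest]; [exists x'; exact Hx' | exact HE' |].
    assert (Hdiv : inf_R E / K <= inf_R E').
    { apply Hgreatest. intros y' Hy'. destruct (Hcmp y' Hy') as [y [Hy Hyle]].
      specialize (Hlow y Hy). apply Rmult_le_reg_l with K; [exact HK |].
      replace (K * (inf_R E / K)) with (inf_R E) by (field; lra). lra. }
    replace (inf_R E) with (K * (inf_R E / K)) by (field; lra).
    apply Rmult_le_compat_l; lra.
  - rewrite (inf_R_empty E'), (inf_R_empty E); [lra | |].
    + intros x Hx. apply Hempty, Hne. exists x; exact Hx.
    + intros x' Hx'. apply Hempty. exists x'; exact Hx'.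
Qed.

Lemma prob2_le_scal b1 b2 c1 c2 c1' c2' A K : 0 < b1 -> 0 < b2 -> 0 < K ->
  (forall rr, rect_mass b1 c1 b2 c2 rr <= K * rect_mass b1 c1' b2 c2' rr) ->
  (forall rr, rect_mass b1 c1' b2 c2' rr <= K * rect_mass b1 c1 b2 c2 rr) ->
  prob2 b1 c1 b2 c2 A <= K * prob2 b1 c1' b2 c2' A.
Proof.
  intros Hb1 Hb2 HK Hcmp Hcmp'.
  assert (Hcover_nonneg : forall c1 c2, is_lower_bound (fun s => exists r : nat -> rect,
      (forall p, A p -> exists m, in_rect (r m) p) /\
      infinite_sum (fun m => rect_mass b1 c1 b2 c2 (r m)) s) 0).
  { intros d1 d2 s [r [_ Hs]].
    apply (infinite_sum_nonneg _ _ (fun m => rect_mass_nonneg b1 d1 b2 d2 (r m) Hb1 Hb2) Hs). }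
  unfold prob2. apply inf_R_le_scal; [exact HK | apply Hcover_nonneg | apply Hcover_nonneg | |].
  - intros s' [r [Hcover Hs']].
    destruct (infinite_sum_le_scal (fun m => rect_mass b1 c1' b2 c2' (r m))
                (fun m => rect_mass b1 c1 b2 c2 (r m)) K s') as [s [Hs Hle]]; [| exact Hs' |].
    + intro m. split; [apply rect_mass_nonneg; assumption | apply Hcmp].
    + exists s. split; [exists r; split; assumption | exact Hle].
  - intros [s [r [Hcover Hs]]].
    destruct (infinite_sum_le_scal (fun m => rect_mass b1 c1 b2 c2 (r m))
                (fun m => rect_mass b1 c1' b2 c2' (r m)) K s) as [s' [Hs' _]]; [| exact Hs |].
    + intro m. split; [apply rect_mass_nonneg; assumption | apply Hcmp'].
    + exists s', r. split; assumption.
Qed.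

Lemma prob2_shift_le b1 b2 c1 c2 c1' c2' A eps : 0 < b1 -> 0 < b2 ->
  Rabs (c1 - c1') / b1 + Rabs (c2 - c2') / b2 <= eps ->
  prob2 b1 c1 b2 c2 A <= exp eps * prob2 b1 c1' b2 c2' A.
Proof.
  intros Hb1 Hb2 Hloss.
  assert (Hrect : forall d1 d2 d1' d2',
    Rabs (d1 - d1') / b1 + Rabs (d2 - d2') / b2 <= eps ->
    forall rr, rect_mass b1 d1 b2 d2 rr <= exp eps * rect_mass b1 d1' b2 d2' rr).
  { intros d1 d2 d1' d2' Hd rr.
    eapply Rle_trans; [apply rect_mass_shift_le; assumption |].
    apply Rmult_le_compat_r; [apply rect_mass_nonneg; assumption |].
    apply exp_le_exp_compat, Hd. }
  apply prob2_le_scal; [exact Hb1 | exact Hb2 | apply exp_pos | apply Hrect, Hloss |].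
  apply Hrect. rewrite (Rabs_minus_sym c1'), (Rabs_minus_sym c2'). exact Hloss.
Qed.

Lemma Rsum_cons a l : Rsum (a :: l) = a + Rsum l.
Proof. reflexivity. Qed.

Lemma Rsum_perm l l' : Permutation l l' -> Rsum l = Rsum l'.
Proof. induction 1; rewrite ?Rsum_cons; lra. Qed.

Lemma Rsum_map_plus {A} (l : list A) f g :
  Rsum (map (fun i => f i + g i) l) = Rsum (map f l) + Rsum (map g l).
Proof. induction l as [| a l IH]; cbn [map]; rewrite ?Rsum_cons, ?IH; [unfold Rsum; simpl | ]; ring. Qed.

Lemma Rsum_map_minus {A} (l : list A) f g :
  Rsum (map (fun i => f i - g i) l) = Rsum (map f l) - Rsum (map g l).
Proof. induction l as [| a l IH]; cbn [map]; rewrite ?Rsum_cons, ?IH; [unfold Rsum; simpl | ]; ring. Qed.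

Lemma Rsum_map_scal {A} (l : list A) c f :
  Rsum (map (fun i => c * f i) l) = c * Rsum (map f l).
Proof. induction l as [| a l IH]; cbn [map]; rewrite ?Rsum_cons, ?IH; [unfold Rsum; simpl | ]; ring. Qed.

Lemma Rsum_map_abs_le {A} (l : list A) f g : (forall i, Rabs (f i) <= g i) ->
  Rabs (Rsum (map f l)) <= Rsum (map g l).
Proof.
  intros Hfg. induction l as [| a l IH]; cbn [map]; rewrite ?Rsum_cons.
  - unfold Rsum; simpl. rewrite Rabs_R0. lra.
  - eapply Rle_trans; [apply Rabs_triang |]. specialize (Hfg a). lra.
Qed.

Lemma INR_length_Rsum {A} (l : list A) : INR (length l) = Rsum (map (fun _ => 1) l).
Proof. induction l as [| a l IH]; cbn [length map]; rewrite ?S_INR, ?Rsum_cons, ?IH; [reflexivity | ring]. Qed.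

Lemma Rsum_unit_bounds l : (forall y, In y l -> 0 <= y <= 1) -> 0 <= Rsum l <= INR (length l).
Proof.
  induction l as [| a l IH]; intros Hl; cbn [length]; rewrite ?Rsum_cons, ?S_INR.
  - unfold Rsum; simpl. lra.
  - assert (Ha := Hl a (or_introl eq_refl)).
    assert (IH' := IH (fun y Hy => Hl y (or_intror Hy))). lra.
Qed.

Lemma Rsum_sqr_sub l c :
  Rsum (map (fun y => (y - c) ^ 2) l)
  = Rsum (map (fun y => y ^ 2) l) - 2 * c * Rsum l + c ^ 2 * INR (length l).
Proof.
  induction l as [| a l IH]; cbn [map length]; rewrite ?Rsum_cons, ?S_INR, ?IH;
    [unfold Rsum; simpl |]; ring.
Qed.

Lemma Rsum_indicator_notin a c l : ~ In a l ->
  Rsum (map (fun i => if Nat.eqb a i then c else 0) l) = 0.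
Proof.
  induction l as [| i l IH]; intros Hnotin; cbn [map]; [reflexivity |].
  rewrite Rsum_cons, IH by (intro; apply Hnotin; right; assumption).
  destruct (Nat.eqb_spec a i); [exfalso; apply Hnotin; left; auto | ring].
Qed.

Lemma Rsum_indicator_NoDup a c l : NoDup l -> In a l ->
  Rsum (map (fun i => if Nat.eqb a i then c else 0) l) = c.
Proof.
  induction 1 as [| i l Hi Hl IH]; intros Hin; [destruct Hin |].
  cbn [map]. rewrite Rsum_cons.
  destruct (Nat.eqb_spec a i) as [-> | Hne].
  - rewrite Rsum_indicator_notin by exact Hi. ring.
  - destruct Hin as [-> | Hin]; [contradiction |]. rewrite IH by exact Hin. ring.
Qed.

Lemma sum_groups_indicator k a c : (1 <= a <= k)%nat ->
  sum_groups k (fun i => if Nat.eqb a i then c else 0) = c.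
Proof. intros Ha. apply Rsum_indicator_NoDup; [apply seq_NoDup | apply in_seq; lia]. Qed.

Definition valid_row (k : nat) (x : row) : Prop := (1 <= fst x <= k)%nat /\ 0 <= snd x <= 1.

(* On the empty list this is 0, since / 0 = 0. *)
Definition sqr_sum_div_len (l : list R) : R := Rsum l ^ 2 / INR (length l).

Lemma group_cons (r : row) (D : db) i :
  group (r :: D) i = if Nat.eqb (fst r) i then snd r :: group D i else group D i.
Proof. unfold group. simpl. destruct (Nat.eqb (fst r) i); reflexivity. Qed.

Lemma in_group (D : db) i y : In y (group D i) -> exists x, In x D /\ y = snd x.
Proof.
  unfold group. intros Hy. apply in_map_iff in Hy. destruct Hy as [x [<- Hx]].
  apply filter_In in Hx. exists x. split; [apply Hx | reflexivity].
Qed.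

Lemma group_perm (D D' : db) i : Permutation D D' -> Permutation (group D i) (group D' i).
Proof.
  induction 1 as [| x D D' _ IH | x y D | D D' D'' _ IH _ IH']; rewrite ?group_cons.
  - constructor.
  - destruct (Nat.eqb (fst x) i); [constructor |]; exact IH.
  - destruct (Nat.eqb (fst x) i), (Nat.eqb (fst y) i); try apply perm_swap; reflexivity.
  - eapply Permutation_trans; eassumption.
Qed.

Lemma SSA_perm k (D D' : db) : Permutation D D' -> SSA k D = SSA k D'.
Proof.
  intros HP. unfold SSA, sum_groups, mean_i, mean_all, n_i. f_equal. apply map_ext. intro i.
  rewrite (Rsum_perm _ _ (group_perm _ _ i HP)), (Permutation_length (group_perm _ _ i HP)),
    (Rsum_perm _ _ (Permutation_map snd HP)), (Permutation_length HP).
  reflexivity.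
Qed.

Lemma SSE_perm k (D D' : db) : Permutation D D' -> SSE k D = SSE k D'.
Proof.
  intros HP. unfold SSE, sum_groups, mean_i, n_i. f_equal. apply map_ext. intro i.
  rewrite (Rsum_perm _ _ (group_perm _ _ i HP)), (Permutation_length (group_perm _ _ i HP)).
  apply Rsum_perm, Permutation_map, group_perm, HP.
Qed.

Lemma sum_groups_group k (D : db) (f : R -> R) :
  (forall x, In x D -> (1 <= fst x <= k)%nat) ->
  sum_groups k (fun i => Rsum (map f (group D i))) = Rsum (map (fun x => f (snd x)) D).
Proof.
  unfold sum_groups. induction D as [| x D IH]; intros Hlabels.
  - cbn. induction (seq 1 k); cbn [map]; rewrite ?Rsum_cons, ?IHl; [reflexivity | ring].
  - cbn [map]. rewrite Rsum_cons, <- IH by (intros; apply Hlabels; right; assumption).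
    rewrite <- (sum_groups_indicator k (fst x) (f (snd x))) by (apply Hlabels; left; reflexivity).
    unfold sum_groups. rewrite <- Rsum_map_plus. f_equal. apply map_ext. intro i.
    rewrite group_cons. destruct (Nat.eqb (fst x) i); cbn [map]; rewrite ?Rsum_cons; ring.
Qed.

Lemma Rsum_sqr_dev l :
  Rsum (map (fun y => (y - Rsum l / INR (length l)) ^ 2) l)
  = Rsum (map (fun y => y ^ 2) l) - sqr_sum_div_len l.
Proof.
  rewrite Rsum_sqr_sub. unfold sqr_sum_div_len.
  destruct l as [| y l]; [unfold Rsum, Rdiv; simpl; ring |].
  assert (0 < INR (length (y :: l))) by (apply lt_0_INR; simpl; lia).
  field. lra.
Qed.

Lemma length_mul_sqr_dev l mu :
  INR (length l) * (Rsum l / INR (length l) - mu) ^ 2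
  = sqr_sum_div_len l - 2 * mu * Rsum l + mu ^ 2 * INR (length l).
Proof.
  unfold sqr_sum_div_len.
  destruct l as [| y l]; [unfold Rsum, Rdiv; simpl; ring |].
  assert (0 < INR (length (y :: l))) by (apply lt_0_INR; simpl; lia).
  field. lra.
Qed.

Lemma SSE_eq k (D : db) : (forall x, In x D -> (1 <= fst x <= k)%nat) ->
  SSE k D = Rsum (map (fun x => snd x ^ 2) D) - sum_groups k (fun i => sqr_sum_div_len (group D i)).
Proof.
  intros Hlabels. rewrite <- (sum_groups_group k D (fun y => y ^ 2) Hlabels).
  unfold SSE, sum_groups. rewrite <- Rsum_map_minus. f_equal. apply map_ext. intro i.
  apply Rsum_sqr_dev.
Qed.

Lemma SSA_eq k (D : db) : (forall x, In x D -> (1 <= fst x <= k)%nat) ->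
  SSA k D = sum_groups k (fun i => sqr_sum_div_len (group D i)) - sqr_sum_div_len (map snd D).
Proof.
  intros Hlabels. unfold SSA, mean_all, mean_i.
  assert (Htotal : sum_groups k (fun i => Rsum (group D i)) = Rsum (map snd D)).
  { transitivity (sum_groups k (fun i => Rsum (map (fun y => y) (group D i)))).
    - unfold sum_groups. f_equal. apply map_ext. intro i. rewrite map_id. reflexivity.
    - apply sum_groups_group, Hlabels. }
  assert (Hcount : sum_groups k (fun i => n_i D i) = INR (length D)).
  { transitivity (sum_groups k (fun i => Rsum (map (fun _ => 1) (group D i)))).
    - unfold sum_groups, n_i. f_equal. apply map_ext. intro i. apply INR_length_Rsum.
    - rewrite sum_groups_group by exact Hlabels. symmetry. apply INR_length_Rsum. }
  unfold sum_groups, n_i in *.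
  set (mu := Rsum (map snd D) / INR (length D)).
  rewrite (map_ext _ (fun i => (sqr_sum_div_len (group D i) + (-2 * mu) * Rsum (group D i))
                               + mu ^ 2 * INR (length (group D i)))).
  2:{ intro i. rewrite length_mul_sqr_dev. ring. }
  rewrite !Rsum_map_plus, !Rsum_map_scal, Htotal, Hcount.
  replace (sqr_sum_div_len (map snd D)) with (Rsum (map snd D) ^ 2 / INR (length D))
    by (unfold sqr_sum_div_len; rewrite length_map; reflexivity).
  unfold mu.
  destruct D as [| x D]; [unfold Rsum, Rdiv; simpl; ring |].
  assert (0 < INR (length (x :: D))) by (apply lt_0_INR; simpl; lia).
  field. lra.
Qed.

(* For m = 0 the junk value s ^ 2 / 0 = 0 is exactly F of the empty list. *)
Lemma sqr_div_succ_sub_le s m y : 0 <= s <= m -> 0 <= y <= 1 ->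
  Rabs ((s + y) ^ 2 / (m + 1) - s ^ 2 / m) <= 1.
Proof.
  intros Hs Hy. destruct (Req_dec m 0) as [-> | Hm].
  - replace s with 0 by lra. unfold Rdiv. rewrite Rinv_0, !Rplus_0_l, Rinv_1.
    apply Rabs_le. nra.
  - assert (Hpos : 0 < m * (m + 1)) by nra.
    replace ((s + y) ^ 2 / (m + 1) - s ^ 2 / m)
      with ((- s ^ 2 + 2 * m * s * y + m * y ^ 2) / (m * (m + 1))) by (field; lra).
    assert (0 <= (s - m * y) ^ 2) by apply pow2_ge_0.
    assert (m * (m + 1) * y ^ 2 <= m * (m + 1) * 1) by (apply Rmult_le_compat_l; nra).
    assert (s ^ 2 <= m ^ 2) by nra.
    assert (0 <= m * s * y) by (repeat apply Rmult_le_pos; lra).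
    assert (Hnum : - (m * (m + 1)) <= - s ^ 2 + 2 * m * s * y + m * y ^ 2 <= m * (m + 1))
      by (split; nra).
    apply Rabs_le. unfold Rdiv.
    split; apply Rmult_le_reg_r with (m * (m + 1)); try exact Hpos;
      rewrite Rmult_assoc, Rinv_l by lra; lra.
Qed.

Lemma sqr_sum_div_len_cons_le l y : (forall x, In x l -> 0 <= x <= 1) -> 0 <= y <= 1 ->
  Rabs (sqr_sum_div_len (y :: l) - sqr_sum_div_len l) <= 1.
Proof.
  intros Hl Hy. unfold sqr_sum_div_len.
  rewrite Rsum_cons, (Rplus_comm y). cbn [length]. rewrite S_INR.
  apply sqr_div_succ_sub_le; [apply Rsum_unit_bounds, Hl | exact Hy].
Qed.

Section AddRow.

Variables (k : nat) (r : row) (C : db).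
Hypothesis r_label : (1 <= fst r <= k)%nat.
Hypothesis r_response : 0 <= snd r <= 1.
Hypothesis C_responses : forall x, In x C -> 0 <= snd x <= 1.

Lemma sum_groups_sqr_sum_div_len_cons_le :
  Rabs (sum_groups k (fun i => sqr_sum_div_len (group (r :: C) i))
        - sum_groups k (fun i => sqr_sum_div_len (group C i))) <= 1.
Proof.
  unfold sum_groups. rewrite <- Rsum_map_minus.
  eapply Rle_trans; [| right; apply (sum_groups_indicator k (fst r) 1 r_label)].
  apply Rsum_map_abs_le. intro i. rewrite group_cons.
  destruct (Nat.eqb (fst r) i).
  - apply sqr_sum_div_len_cons_le; [| exact r_response].
    intros y Hy. destruct (in_group C i y Hy) as [x [Hx ->]]. apply C_responses, Hx.
  - rewrite Rminus_diag, Rabs_R0. lra.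
Qed.

Lemma sqr_sum_div_len_responses_cons_le :
  Rabs (sqr_sum_div_len (map snd (r :: C)) - sqr_sum_div_len (map snd C)) <= 1.
Proof.
  apply sqr_sum_div_len_cons_le; [| exact r_response].
  intros y Hy. apply in_map_iff in Hy. destruct Hy as [x [<- Hx]]. apply C_responses, Hx.
Qed.

End AddRow.

Section ReplaceRow.

Variables (k : nat) (r r' : row) (C : db).
Hypothesis rows_valid : forall x, In x (r :: C) -> valid_row k x.
Hypothesis rows_valid' : forall x, In x (r' :: C) -> valid_row k x.

Let r_valid : valid_row k r := rows_valid r (or_introl eq_refl).
Let r'_valid : valid_row k r' := rows_valid' r' (or_introl eq_refl).
Let C_responses x (Hx : In x C) : 0 <= snd x <= 1 := proj2 (rows_valid x (or_intror Hx)).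

Lemma SSE_replace_row_le : Rabs (SSE k (r :: C) - SSE k (r' :: C)) <= 3.
Proof.
  rewrite (SSE_eq k (r :: C) (fun x Hx => proj1 (rows_valid x Hx))),
    (SSE_eq k (r' :: C) (fun x Hx => proj1 (rows_valid' x Hx))).
  pose proof (sum_groups_sqr_sum_div_len_cons_le k r C (proj1 r_valid) (proj2 r_valid) C_responses).
  pose proof (sum_groups_sqr_sum_div_len_cons_le k r' C (proj1 r'_valid) (proj2 r'_valid) C_responses).
  cbn [map]. rewrite !Rsum_cons.
  assert (0 <= snd r ^ 2 <= 1) by (pose proof (proj2 r_valid); nra).
  assert (0 <= snd r' ^ 2 <= 1) by (pose proof (proj2 r'_valid); nra).
  split_Rabs; lra.
Qed.

Lemma SSA_replace_row_le : Rabs (SSA k (r :: C) - SSA k (r' :: C)) <= 4.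
Proof.
  rewrite (SSA_eq k (r :: C) (fun x Hx => proj1 (rows_valid x Hx))),
    (SSA_eq k (r' :: C) (fun x Hx => proj1 (rows_valid' x Hx))).
  pose proof (sum_groups_sqr_sum_div_len_cons_le k r C (proj1 r_valid) (proj2 r_valid) C_responses).
  pose proof (sum_groups_sqr_sum_div_len_cons_le k r' C (proj1 r'_valid) (proj2 r'_valid) C_responses).
  pose proof (sqr_sum_div_len_responses_cons_le r C (proj2 r_valid) C_responses).
  pose proof (sqr_sum_div_len_responses_cons_le r' C (proj2 r'_valid) C_responses).
  split_Rabs; lra.
Qed.

End ReplaceRow.

Lemma differ_at_one_perm {A} (d : A) (l l' : list A) j :
  length l = length l' -> (j < length l)%nat ->
  (forall i, i <> j -> nth i l d = nth i l' d) ->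
  exists x x' c, Permutation l (x :: c) /\ Permutation l' (x' :: c).
Proof.
  revert l' j. induction l as [| a l IH]; intros [| a' l'] j Hlen Hj Hnth;
    cbn [length] in *; try lia.
  destruct j as [| j].
  - exists a, a', l. split; [reflexivity |].
    replace l' with l; [reflexivity |].
    apply nth_ext with d d; [lia |]. intros i _. apply (Hnth (S i)). lia.
  - destruct (IH l' j) as (x & x' & c & Hp & Hp'); [lia | lia | |].
    + intros i Hi. apply (Hnth (S i)). lia.
    + replace a' with a by (apply (Hnth 0%nat); lia).
      exists x, x', (a :: c).
      split; (eapply Permutation_trans; [apply perm_skip; eassumption | apply perm_swap]).
Qed.

Lemma b_SSA_ge eps n : 0 < eps -> (0 < n)%nat -> 9 / (eps / 2) <= b_SSA eps n.
Proof.
  intros Heps Hn. unfold b_SSA, Rdiv.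
  assert (0 < INR n) by (apply lt_0_INR; exact Hn).
  assert (0 < / INR n) by (apply Rinv_0_lt_compat; lra).
  assert (0 < / (eps * / 2)) by (apply Rinv_0_lt_compat; lra).
  nra.
Qed.

Lemma b_SSA_pos eps n : 0 < eps -> (0 < n)%nat -> 0 < b_SSA eps n.
Proof.
  intros Heps Hn. eapply Rlt_le_trans; [| apply b_SSA_ge; assumption].
  apply Rdiv_lt_0_compat; lra.
Qed.

Lemma b_SSE_pos eps : 0 < eps -> 0 < b_SSE eps.
Proof. intros Heps. unfold b_SSE. apply Rdiv_lt_0_compat; lra. Qed.

Lemma noise_scales_budget eps n a e : 0 < eps -> (0 < n)%nat ->
  0 <= a <= 4 -> 0 <= e <= 3 -> a / b_SSA eps n + e / b_SSE eps <= eps.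
Proof.
  intros Heps Hn Ha He.
  pose proof (b_SSA_ge eps n Heps Hn) as Hb.
  assert (H9 : 0 < 9 / (eps / 2)) by (apply Rdiv_lt_0_compat; lra).
  assert (HSSA : a / b_SSA eps n <= 2 * eps / 9).
  { replace (2 * eps / 9) with (4 * / (9 / (eps / 2))) by (field; lra).
    apply Rmult_le_compat; try lra.
    - left. apply Rinv_0_lt_compat. lra.
    - apply Rinv_le_contravar; assumption. }
  assert (HSSE : e / b_SSE eps <= 3 * eps / 14).
  { unfold b_SSE. replace (e / (7 / (eps / 2))) with (e * eps / 14) by (field; lra). nra. }
  lra.
Qed.

Theorem mainTheorem3 (eps : R) (k n : nat) :
  0 < eps -> (2 <= k)%nat -> (k < n)%nat ->
  forall D D' : db,
    valid_db k n D -> valid_db k n D' -> neighboring n D D' ->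
    forall S : R3 -> Prop, borel3 S ->
      prob_alg eps k n D S <= exp eps * prob_alg eps k n D' S.
Proof.
  intros Heps Hk Hkn D D' [HlenD HD] [HlenD' HD'] [_ [_ (j & Hj & _ & Hnth)]] S _.
  assert (Hlen : length D = length D') by lia.
  assert (HjD : (j < length D)%nat) by lia.
  destruct (differ_at_one_perm (0%nat, 0) D D' j Hlen HjD Hnth)
    as (r & r' & C & HP & HP').
  assert (Hrows : forall x, In x (r :: C) -> valid_row k x)
    by (intros x Hx; apply HD, (Permutation_in _ (Permutation_sym HP) Hx)).
  assert (Hrows' : forall x, In x (r' :: C) -> valid_row k x)
    by (intros x Hx; apply HD', (Permutation_in _ (Permutation_sym HP') Hx)).
  unfold prob_alg.
  rewrite (SSA_perm k _ _ HP), (SSE_perm k _ _ HP), (SSA_perm k _ _ HP'), (SSE_perm k _ _ HP').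
  apply prob2_shift_le; [apply b_SSA_pos; [exact Heps | lia] | apply b_SSE_pos, Heps |].
  apply noise_scales_budget; [exact Heps | lia | split | split]; try apply Rabs_pos.
  - exact (SSA_replace_row_le k r r' C Hrows Hrows').
  - exact (SSE_replace_row_le k r r' C Hrows Hrows').
Qed.
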